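(* Let $b\in\mathbb{N}$, $0\le a\le b-1$, and let $m,n\ge2$ be the minimal integers with $ma\equiv a\pmod b$ and $a^n\equiv a\pmod b$ (assumed to exist). Put $I=(m-1)a/b$ and $J=(a^n-a)/b$ (these are nonnegative integers). Let $q\in\mathbb{N}$ and for $k=0,\dots,q-1$ let $x''_k=\{a+bk+bql : l\in\mathbb{Z}\}$ be the secondary classes. Define $\nu''_m[x''_{k_1},\dots,x''_{k_m}]$ to be the secondary class containing $x_{k_1}+\dots+x_{k_m}$ and $\mu''_n[x''_{k_1},\dots,x''_{k_n}]$ the secondary class containing $x_{k_1}\cdots x_{k_n}$, where $x_{k_i}$ is any representative of $x''_{k_i}$. Then these operations are well defined, commutative, satisfy polyadic distributivity, and $$\nu''_m[x''_{k_1},\dots,x''_{k_m}]=x''_{k_{add}},\qquad k_{add}\equiv (k_1+\dots+k_m)+I \pmod q,$$ $$\mu''_n[x''_{k_1},\dots,x''_{k_n}]=x''_{k_{mult}},\qquad k_{mult}\equiv \sum_{j=1}^{n} a^{n-j}b^{j-1}e_j(k_1,\dots,k_n)+J \pmod q,$$ where $e_j$ is the $j$-th elementary symmetric polynomial (so $e_1=k_1+\dots+k_n$, $e_2=\sum_{i<j}k_ik_j$, …, $e_n=k_1\cdots k_n$).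
   Context: Polyadic distributivity means: for all elements, $\mu''_n[\nu''_m[y_1,\dots,y_m],x_2,\dots,x_n]=\nu''_m[\mu''_n[y_1,x_2,\dots,x_n],\dots,\mu''_n[y_m,x_2,\dots,x_n]]$ (and likewise with the sum in any argument position of $\mu''_n$). *)

From mathcomp Require Import all_boot all_order all_algebra all_fingroup.
Set Implicit Arguments. Unset Strict Implicit. Unset Printing Implicit Defensive.
Import Order.TTheory GRing.Theory Num.Theory.
Local Open Scope ring_scope.

Definition sec (a b q k : nat) : int -> Prop :=
  fun x => exists l : int, x = a%:Z + b%:Z * k%:Z + b%:Z * q%:Z * l.

Definition elem_sym (n : nat) (ks : 'I_n -> nat) (j : nat) : nat :=
  (\sum_(s : {set 'I_n} | #|s| == j) \prod_(i in s) ks i)%N.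

Definition upd (T : Type) (n : nat) (f : 'I_n -> T) (p : 'I_n) (y : T) : 'I_n -> T :=
  fun i => if i == p then y else f i.

From mathcomp Require Import all_boot all_algebra all_fingroup ring.
Import GRing.Theory.

(* Every element of x''_k is congruent to a + b k modulo b q, and congruences
   modulo b q are compatible with sums and products.  Since m a = a + I b, a sum
   of representatives a + b k_i is a + b (k_1 + ... + k_m + I); expanding
   (a + b k_1) ... (a + b k_n) over the subsets of indices gives
   a^n + b (sum_j a^(n-j) b^(j-1) e_j), and a^n = a + J b.  As b > 0 and the k
   are residues mod q, an integer lies in exactly one secondary class, so
   commutativity and distributivity of nu'' and mu'' are inherited from those
   of + and * on Z. *)

Set Implicit Arguments.
Unset Strict Implicit.
Unset Printing Implicit Defensive.

Lemma elem_sym0 n (k : 'I_n -> nat) : elem_sym k 0 = 1%N.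
Proof.
rewrite /elem_sym (eq_bigl (pred1 set0)) ?big_pred1_eq ?big_set0 // => s.
by rewrite /= cards_eq0.
Qed.

Lemma prod_if_in n a b (k : 'I_n -> nat) (S : {set 'I_n}) :
  (\prod_(i < n) (if i \in S then b * k i else a) =
   a ^ (n - #|S|) * b ^ #|S| * \prod_(i in S) k i)%N.
Proof.
rewrite (bigID (mem S)) /= mulnC.
rewrite [X in X * _](eq_bigr (fun=> a)) => [|i /negbTE -> //].
rewrite [X in _ * X](eq_bigr (fun i => b * k i)) => [|i -> //].
rewrite prod_nat_const big_split prod_nat_const /= mulnA.
suff -> : #|[pred i | i \notin S]| = #|'I_n| - #|S| by rewrite card_ord.
rewrite -(cardsC S) addKn.
by apply: eq_card => i; rewrite !inE.
Qed.

Lemma prod_affine_elem_sym n a b (k : 'I_n -> nat) :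
  (\prod_(i < n) (a + b * k i) =
   \sum_(j < n.+1) a ^ (n - j) * b ^ j * elem_sym k j)%N.
Proof.
under eq_bigr do rewrite addnC.
rewrite bigA_distr.
under eq_bigr do rewrite prod_if_in.
have card_lt (S : {set 'I_n}) : #|S| < n.+1.
  by rewrite ltnS -[leqRHS](card_ord n) max_card.
rewrite (partition_big (fun S => Ordinal (card_lt S)) xpredT) //=.
apply: eq_bigr => j _; rewrite /elem_sym big_distrr /=.
apply: eq_big => [S | S /eqP <- //]; first by rewrite -val_eqE.
Qed.

Lemma prod_affine n a b (k : 'I_n -> nat) :
  (\prod_(i < n) (a + b * k i) =
   a ^ n + b * \sum_(j < n) a ^ (n - j.+1) * b ^ j * elem_sym k j.+1)%N.
Proof.
rewrite prod_affine_elem_sym big_ord_recl elem_sym0 subn0 !muln1 big_distrr /=.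
by congr (_ + _); apply: eq_bigr => j _; rewrite expnS mulnCA !mulnA.
Qed.

Lemma modn_eq_addDiv x y d : (y <= x)%N -> (x = y %[mod d])%N ->
  (x = y + (x - y) %/ d * d)%N.
Proof. by move=> le_yx /eqP; rewrite eqn_mod_dvd // => /divnK ->; rewrite subnKC. Qed.

(* [N %% q] as an element of ['I_q]; the element [i] only witnesses [0 < q]. *)
Definition ord_mod q (i : 'I_q) (N : nat) : 'I_q :=
  Ordinal (ltn_pmod N (leq_ltn_trans (leq0n i) (ltn_ord i))).

Local Open Scope ring_scope.

Lemma eqz_mod_sum (I : Type) (r : seq I) (d : int) (u v : I -> int) :
  (forall i, u i = v i %[mod d])%Z ->
  (\sum_(i <- r) u i = \sum_(i <- r) v i %[mod d])%Z.
Proof.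
move=> uv; elim/big_ind2: _ => // x1 y1 x2 y2 e1 e2.
by rewrite -modzDm e1 e2 modzDm.
Qed.

Lemma eqz_mod_prod (I : Type) (r : seq I) (d : int) (u v : I -> int) :
  (forall i, u i = v i %[mod d])%Z ->
  (\prod_(i <- r) u i = \prod_(i <- r) v i %[mod d])%Z.
Proof.
move=> uv; elim/big_ind2: _ => // x1 y1 x2 y2 e1 e2.
by rewrite -modzMm e1 e2 modzMm.
Qed.

Lemma prod_upd (R : comPzRingType) n (X : 'I_n -> R) p y :
  \prod_(i < n) upd X p y i = y * \prod_(i < n | i != p) X i.
Proof.
rewrite (bigD1 p) //= /upd eqxx; congr (_ * _).
by apply: eq_bigr => i /negbTE ->.
Qed.

Section SecondaryClass.
Variables a b q : nat.

Lemma secE (k : nat) (x : int) :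
  sec a b q k x <-> (x = (a + b * k)%N %[mod (b * q)%N])%Z.
Proof.
rewrite /sec; split=> [[l ->] | ].
  by rewrite addrC mulrC -!PoszM -PoszD modzMDl.
move/eqP; rewrite eqz_mod_dvd => /dvdzP [l e]; exists l.
by rewrite -(subrK (a + b * k)%N%:Z x) e PoszD !PoszM; ring.
Qed.

Lemma sec_modn (N : nat) (x : int) : sec a b q N x -> sec a b q (N %% q) x.
Proof.
rewrite !secE => ->; rewrite !modz_nat; congr Posz.
by rewrite muln_modr modnDmr.
Qed.

Lemma sec_inj (k K : nat) (x : int) : (0 < b)%N -> (k < q)%N -> (K < q)%N ->
  sec a b q k x -> sec a b q K x -> k = K.
Proof.
move=> b_gt0 kq Kq; rewrite !secE => -> /eqP; rewrite !modz_nat eqz_nat eqn_modDl.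
by rewrite -!muln_modr eqn_pmul2l // !modn_small // => /eqP.
Qed.

Lemma sec_rep (k : nat) : sec a b q k (a + b * k)%N.
Proof. exact/secE. Qed.

Lemma sec_ord_inj (k K : 'I_q) (x : int) : (0 < b)%N ->
  sec a b q k x -> sec a b q K x -> k = K.
Proof.
by move=> b_gt0 hk hK; apply/val_inj/(sec_inj b_gt0 (ltn_ord k) (ltn_ord K) hk hK).
Qed.

Lemma sec_sum m I (ks : 'I_m -> nat) (x : 'I_m -> int) :
  (m * a = a + I * b)%N -> (forall i, sec a b q (ks i) (x i)) ->
  sec a b q ((\sum_(i < m) ks i + I) %% q) (\sum_(i < m) x i).
Proof.
move=> hI hx; apply/sec_modn/secE.
rewrite (eqz_mod_sum _ (fun i => proj1 (secE _ _) (hx i))).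
under eq_bigr do rewrite -natz; rewrite -natr_sum natz; congr (_ %% _)%Z; congr Posz.
rewrite big_split sum_nat_const card_ord -big_distrr /= hI; ring.
Qed.

Lemma sec_prod n J (ks : 'I_n -> nat) (x : 'I_n -> int) :
  (a ^ n = a + J * b)%N -> (forall i, sec a b q (ks i) (x i)) ->
  sec a b q ((\sum_(j < n) a ^ (n - j.+1) * b ^ j * elem_sym ks j.+1 + J) %% q)
    (\prod_(i < n) x i).
Proof.
move=> hJ hx; apply/sec_modn/secE.
rewrite (eqz_mod_prod _ (fun i => proj1 (secE _ _) (hx i))).
under eq_bigr do rewrite -natz; rewrite -natr_prod natz; congr (_ %% _)%Z; congr Posz.
rewrite prod_affine hJ; ring.
Qed.

End SecondaryClass.

Theorem mainTheorem2 (b a m n q : nat)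
  (hab : (a < b)%N)
  (hm2 : (2 <= m)%N) (hm : (m * a = a %[mod b])%N)
  (hmmin : forall m' : nat, (2 <= m')%N -> (m' < m)%N -> (m' * a <> a %[mod b])%N)
  (hn2 : (2 <= n)%N) (hn : (a ^ n = a %[mod b])%N)
  (hnmin : forall n' : nat, (2 <= n')%N -> (n' < n)%N -> (a ^ n' <> a %[mod b])%N) :
  let I := ((m - 1) * a %/ b)%N in
  let J := ((a ^ n - a) %/ b)%N in
  exists (nu : ('I_m -> 'I_q) -> 'I_q) (mu : ('I_n -> 'I_q) -> 'I_q),
    [/\ (* nu'' is well defined: the secondary class containing the sum *)
        (forall (ks : 'I_m -> 'I_q) (x : 'I_m -> int),
            (forall i, sec a b q (ks i) (x i)) ->
            sec a b q (nu ks) (\sum_(i < m) x i) /\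
            (forall k : 'I_q, sec a b q k (\sum_(i < m) x i) -> k = nu ks)),
        (* mu'' is well defined: the secondary class containing the product *)
        (forall (ks : 'I_n -> 'I_q) (x : 'I_n -> int),
            (forall i, sec a b q (ks i) (x i)) ->
            sec a b q (mu ks) (\prod_(i < n) x i) /\
            (forall k : 'I_q, sec a b q k (\prod_(i < n) x i) -> k = mu ks)),
        (* commutativity *)
        (forall (s : 'S_m) (ks : 'I_m -> 'I_q), nu (fun i => ks (s i)) = nu ks) /\
        (forall (s : 'S_n) (ks : 'I_n -> 'I_q), mu (fun i => ks (s i)) = mu ks),
        (* polyadic distributivity, in every argument position p of mu'' *)
        (forall (p : 'I_n) (xs : 'I_n -> 'I_q) (ys : 'I_m -> 'I_q),
            mu (upd xs p (nu ys)) = nu (fun j => mu (upd xs p (ys j))))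
      & (* explicit formulas *)
        (forall ks : 'I_m -> 'I_q,
            (nu ks : nat) = ((\sum_(i < m) ks i + I) %% q)%N) /\
        (forall ks : 'I_n -> 'I_q,
            (mu ks : nat) =
            ((\sum_(j < n) a ^ (n - j.+1) * b ^ j * elem_sym (fun i : 'I_n => (ks i : nat)) j.+1
              + J) %% q)%N)].
Proof.
move=> I J.
have b_gt0 : (0 < b)%N by apply: leq_ltn_trans hab.
have m_gt0 : (0 < m)%N by apply: leq_trans hm2.
have n_gt0 : (0 < n)%N by apply: leq_trans hn2.
have hI : (m * a = a + I * b)%N.
  by rewrite /I mulnBl mul1n -modn_eq_addDiv // leq_pmull.
have hJ : (a ^ n = a + J * b)%N.
  rewrite /J -modn_eq_addDiv //; have [-> // | a_gt0] := posnP a.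
  by rewrite -[leqLHS]expn1 leq_pexp2l.
pose nu (ks : 'I_m -> 'I_q) := ord_mod (ks (Ordinal m_gt0)) (\sum_(i < m) ks i + I).
pose mu (ks : 'I_n -> 'I_q) := ord_mod (ks (Ordinal n_gt0))
  (\sum_(j < n) a ^ (n - j.+1) * b ^ j * elem_sym (fun i => (ks i : nat)) j.+1 + J).
have nu_sec (ks : 'I_m -> 'I_q) x :
  (forall i, sec a b q (ks i) (x i)) -> sec a b q (nu ks) (\sum_(i < m) x i).
  exact: sec_sum hI.
have mu_sec (ks : 'I_n -> 'I_q) x :
  (forall i, sec a b q (ks i) (x i)) -> sec a b q (mu ks) (\prod_(i < n) x i).
  exact: sec_prod hJ.
have nu_rep (ks : 'I_m -> 'I_q) := nu_sec ks _ (fun i => sec_rep a b q (ks i)).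
have mu_rep (ks : 'I_n -> 'I_q) := mu_sec ks _ (fun i => sec_rep a b q (ks i)).
exists nu, mu; split.
- move=> ks x hx; split=> [|k hk]; first exact: nu_sec.
  exact: sec_ord_inj b_gt0 hk (nu_sec _ _ hx).
- move=> ks x hx; split=> [|k hk]; first exact: mu_sec.
  exact: sec_ord_inj b_gt0 hk (mu_sec _ _ hx).
- split=> s ks.
    apply: sec_ord_inj b_gt0 (nu_rep _) _.
    by have := nu_rep ks; rewrite (reindex_inj (@perm_inj _ s)).
  apply: sec_ord_inj b_gt0 (mu_rep _) _.
  by have := mu_rep ks; rewrite (reindex_inj (@perm_inj _ s)).
- move=> p xs ys; pose X i : int := (a + b * xs i)%N.
  have upd_sec (k : 'I_q) y : sec a b q k y -> forall i, sec a b q (upd xs p k i) (upd X p y i).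
    by move=> hy i; rewrite /upd; case: (i == p); last exact: sec_rep.
  apply: sec_ord_inj b_gt0 (mu_sec _ _ (upd_sec _ _ (nu_rep ys))) _.
  rewrite prod_upd mulr_suml; under eq_bigr do rewrite -prod_upd.
  by apply: nu_sec => j; apply/mu_sec/upd_sec/sec_rep.
- by [].
Qed.
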